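(* Let $\mathbb{A}=(a_{i_1\ldots i_m})\in T_{m,n}$ be a tensor such that, whenever $a_{i_1\ldots i_m}>0$ and $(i_1,\ldots,i_m)$ is not of the form $(i,\ldots,i)$, we have $a_{i_1\ldots i_m}=a_{i_{\sigma(1)}\ldots i_{\sigma(m)}}$ for every permutation $\sigma$ of $\{1,\ldots,m\}$. (1) If $\mathbb{A}$ is a $B_0$ tensor, then either $\mathbb{A}$ is itself a diagonally dominated $Z$ tensor, or $$\mathbb{A}=\mathbb{M}+\sum_{k=1}^s h_k\mathcal{E}^{J_k},$$ where $\mathbb{M}\in T_{m,n}$ is a diagonally dominated $Z$ tensor, $s$ is a positive integer, $h_k>0$ and $J_k\subseteq[n]$ for $k=1,\ldots,s$, and $J_s\subsetneqq J_{s-1}\subsetneqq\cdots\subsetneqq J_1$. (2) If $\mathbb{A}$ is a $B$ tensor, then either $\mathbb{A}$ is itself a strictly diagonally dominated $Z$ tensor, or $\mathbb{A}$ admits a decomposition as in (1) in which $\mathbb{M}$ is a strictly diagonally dominated $Z$ tensor.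
   Context: $T_{m,n}$ denotes the set of real $m$th order $n$-dimensional tensors $\mathbb{A}=(a_{i_1i_2\ldots i_m})$ with $i_j\in[n]=\{1,\ldots,n\}$. $\mathbb{A}$ is a $Z$ tensor if $a_{i_1\ldots i_m}\le0$ whenever $(i_1,\ldots,i_m)$ is not of the form $(i,\ldots,i)$. $\mathbb{A}$ is diagonally dominated if for all $i\in[n]$, $a_{i\ldots i}\ge\sum\{|a_{ii_2\ldots i_m}|:(i_2,\ldots,i_m)\ne(i,\ldots,i)\}$, and strictly diagonally dominated if this holds with strict inequality for all $i$. $\mathbb{A}$ is a $B$ tensor if for all $i\in[n]$, $\sum_{i_2,\ldots,i_m=1}^n a_{ii_2\ldots i_m}>0$ and $\frac{1}{n^{m-1}}\sum_{i_2,\ldots,i_m=1}^n a_{ii_2\ldots i_m}>a_{ij_2\ldots j_m}$ for all $(j_2,\ldots,j_m)\neq(i,\ldots,i)$; $\mathbb{A}$ is a $B_0$ tensor if the same two conditions hold with $\ge$ in place of $>$. For $J\subseteq[n]$, the partially all one tensor $\mathcal{E}^J\in T_{m,n}$ has entry $1$ at $(i_1,\ldots,i_m)$ if $i_1,\ldots,i_m\in J$ and $0$ otherwise. *)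

From mathcomp Require Import all_boot all_order all_algebra all_fingroup.
Set Implicit Arguments. Unset Strict Implicit. Unset Printing Implicit Defensive.
Import Order.TTheory GRing.Theory Num.Theory.
Local Open Scope ring_scope.

(* A real m-th order n-dimensional tensor: a function from index tuples
   (i_1,...,i_m), encoded as {ffun 'I_m -> 'I_n} (position k <-> i_{k+1}),
   to R.  (Positions are 0-based: position 0 is i_1.) *)
Definition idx (m n : nat) := {ffun 'I_m -> 'I_n}.
Definition tensor (R : Type) (m n : nat) := idx m n -> R.

Definition diagidx (m n : nat) (i : 'I_n) : idx m n := [ffun _ => i].

Definition offdiag (m n : nat) (f : idx m n) : bool :=
  [forall i : 'I_n, f != diagidx m i].

Definition starts_with (m n : nat) (i : 'I_n) (f : idx m n) : bool :=
  [forall k : 'I_m, (val k == 0%N) ==> (f k == i)].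

Definition permidx (m n : nat) (s : 'S_m) (f : idx m n) : idx m n :=
  [ffun k => f (s k)].

Section Defs.
Variables (R : realFieldType) (m n : nat).

Definition is_Z (A : tensor R m n) : Prop :=
  forall f : idx m n, offdiag f -> A f <= 0.

Definition offrow_abs (A : tensor R m n) (i : 'I_n) : R :=
  \sum_(f : idx m n | starts_with i f && (f != diagidx m i)) `|A f|.

Definition diag_dominated (A : tensor R m n) : Prop :=
  forall i : 'I_n, offrow_abs A i <= A (diagidx m i).

Definition strictly_diag_dominated (A : tensor R m n) : Prop :=
  forall i : 'I_n, offrow_abs A i < A (diagidx m i).

Definition rowsum (A : tensor R m n) (i : 'I_n) : R :=
  \sum_(f : idx m n | starts_with i f) A f.

Definition is_B (A : tensor R m n) : Prop :=
  forall i : 'I_n,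
    0 < rowsum A i /\
    forall f : idx m n, starts_with i f -> f != diagidx m i ->
      rowsum A i / (n ^ m.-1)%:R > A f.

Definition is_B0 (A : tensor R m n) : Prop :=
  forall i : 'I_n,
    0 <= rowsum A i /\
    forall f : idx m n, starts_with i f -> f != diagidx m i ->
      rowsum A i / (n ^ m.-1)%:R >= A f.

Definition all_one (J : {set 'I_n}) : tensor R m n :=
  fun f => if [forall k : 'I_m, f k \in J] then 1 else 0.

Definition pos_offdiag_sym (A : tensor R m n) : Prop :=
  forall f : idx m n, offdiag f -> 0 < A f ->
    forall s : 'S_m, A f = A (permidx s f).

Definition decomposes (P : tensor R m n -> Prop) (A : tensor R m n) : Prop :=
  exists (M : tensor R m n) (s : nat) (h : nat -> R) (J : nat -> {set 'I_n}),
    [/\ P M, (0 < s)%N,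
        (forall k, (1 <= k <= s)%N -> 0 < h k),
        (forall k, (1 <= k < s)%N -> J k.+1 \proper J k) &
        forall f : idx m n,
          A f = M f + \sum_(1 <= k < s.+1) h k * all_one (J k) f].

End Defs.

From mathcomp Require Import all_boot all_order all_algebra all_fingroup.
From mathcomp Require Import zify lra.
From Stdlib Require Import FunctionalExtensionality.
Import Order.TTheory GRing.Theory Num.Theory.
Set Implicit Arguments. Unset Strict Implicit. Unset Printing Implicit Defensive.
Local Open Scope ring_scope.

(* Let w_i >= 0 be the largest off-diagonal entry of row i (or 0).  Writing w as
   a "layer cake" w = sum_k h_k 1_{J_k} over the nested superlevel sets J_k of w,
   the tensor S = sum_k h_k E^{J_k} has entries S(i_1..i_m) = min_l w_{i_l}.
   By the symmetry hypothesis a positive off-diagonal entry a_{i_1..i_m} lies in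
   every row i_l, so it is at most min_l w_{i_l}; hence M = A - S is a Z tensor.
   Since M is a Z tensor its diagonal dominance in row i amounts to a
   nonnegative row sum, and the row sum drops by at most n^(m-1) w_i, which the
   B_0 (resp. B) condition bounds by (resp. strictly by) the row sum of A. *)

Section LayerCake.
Variables (R : realFieldType) (T : finType).
Implicit Types (w : T -> R) (h : nat -> R) (J : nat -> {set T}) (X : {set T}).

Definition pos_supp w : {set T} := [set x | 0 < w x].

Definition layer_sum s h J X : R := \sum_(1 <= k < s.+1) h k *+ (X \subset J k).

Definition layer_cake w s h J : Prop :=
  [/\ forall k, (1 <= k <= s)%N -> 0 < h k,
      forall k, (1 <= k < s)%N -> J k.+1 \proper J k,
      forall k, (1 <= k <= s)%N -> J k \subset pos_supp w &
      forall X, X != set0 ->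
        (forall x, x \in X -> layer_sum s h J X <= w x) /\
        exists2 x, x \in X & layer_sum s h J X = w x].

Definition layer_cons (A : Type) (a : A) (u : nat -> A) (k : nat) : A :=
  if (k <= 1)%N then a else u k.-1.

Lemma layer_sum_cons s v h (S : {set T}) J X :
  layer_sum s.+1 (layer_cons v h) (layer_cons S J) X =
  v *+ (X \subset S) + layer_sum s h J X.
Proof.
rewrite /layer_sum big_nat_recl //; congr (_ + _).
by apply: eq_big_nat => k /andP[k_gt0 _]; rewrite /layer_cons ltnNge k_gt0.
Qed.

Lemma layer_cake_nil w h J :
  (forall x, 0 <= w x) -> pos_supp w = set0 -> layer_cake w 0 h J.
Proof.
move=> w_ge0 supp0; have w0 x : w x = 0.
  apply/eqP; rewrite eq_le w_ge0 andbT leNgt; apply/negP => wx_gt0.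
  by have := in_set0 x; rewrite -supp0 inE wx_gt0.
split=> [k|k|k|X /set0Pn[x Xx]]; try lia.
by rewrite /layer_sum big_geq //; split=> [y _|]; [rewrite w0 | exists x; rewrite ?w0].
Qed.

Lemma layer_cake_cons w w' v s h J :
  (forall x, 0 <= w x) -> (forall x, 0 <= w' x) -> 0 < v ->
  pos_supp w' \proper pos_supp w ->
  {in pos_supp w, forall x, w x = v + w' x} ->
  layer_cake w' s h J ->
  layer_cake w s.+1 (layer_cons v h) (layer_cons (pos_supp w) J).
Proof.
move=> w_ge0 w'_ge0 v_gt0 supp_w' wE [h_gt0 J_chain J_supp S_min].
have out0 x : x \notin pos_supp w -> w x = 0 /\ w' x = 0.
  move=> xNw; have xNw' : x \notin pos_supp w'.
    by apply: contra xNw; apply/subsetP/proper_sub.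
  by move: xNw xNw'; rewrite !inE -!leNgt => wx w'x; split; apply/le_anti/andP.
rewrite /layer_cons; split=> [k|k|k|X X0].
- by case: ifP => // k_gt1 /andP[_ ks]; apply: h_gt0; lia.
- move=> /andP[k_gt0 ks]; rewrite ltnNge k_gt0 /=.
  case: ifP => [k1 | k_gt1]; last by rewrite -{1}(prednK k_gt0); apply: J_chain; lia.
  by apply: sub_proper_trans supp_w'; apply: J_supp; lia.
- case: ifP => // k_gt1 /andP[_ ks]; apply: subset_trans (proper_sub supp_w').
  by apply: J_supp; lia.
rewrite -/(layer_cons v h) -/(layer_cons (pos_supp w) J) layer_sum_cons.
have [S_le [x Xx Sx]] := S_min X X0.
have [/subsetP XS | /subsetPn[y Xy yNw]] := boolP (X \subset pos_supp w).
  rewrite mulr1n; split=> [z Xz|]; first by rewrite wE ?XS // lerD2l S_le.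
  by exists x; rewrite // wE ?XS // Sx.
have [wy0 w'y0] := out0 y yNw.
have S0 : layer_sum s h J X = 0.
  by apply/le_anti/andP; split; [rewrite -w'y0; exact: S_le | rewrite Sx].
rewrite mulr0n add0r S0; split=> [z _|]; [exact: w_ge0 | by exists y].
Qed.

Lemma layer_cake_exists w :
  (forall x, 0 <= w x) -> exists s h J, layer_cake w s h J.
Proof.
move: {2}#|pos_supp w| (leqnn #|pos_supp w|) => N.
elim: N w => [|N IH] w supp_le w_ge0;
  have [supp0 | /set0Pn[x1 x1w]] := eqVneq (pos_supp w) set0;
  try by exists 0%N, (fun=> 0), (fun=> set0); exact: layer_cake_nil.
  by move: supp_le; rewrite leqn0 cards_eq0 => /eqP supp0; rewrite supp0 inE in x1w.
have x1_pos : 0 < w x1 by rewrite inE in x1w.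
have [x0 x0_pos w_min] := @arg_minP _ _ _ x1 (fun x => 0 < w x) w x1_pos.
pose w' x := if 0 < w x then w x - w x0 else 0.
have w'_ge0 x : 0 <= w' x.
  by rewrite /w'; case: ifP => // /w_min; rewrite subr_ge0.
have supp_w' : pos_supp w' \proper pos_supp w.
  apply/properP; split; last by exists x0; rewrite !inE /w' x0_pos ?subrr ?ltxx.
  by apply/subsetP => x; rewrite !inE /w'; case: ifP; rewrite ?ltxx.
have [s [h [J cake']]] : exists s h J, layer_cake w' s h J.
  by apply: IH => //; have := proper_card supp_w'; lia.
exists s.+1, (layer_cons (w x0) h), (layer_cons (pos_supp w) J).
apply: layer_cake_cons cake' => // x; rewrite inE /w' => ->; lra.
Qed.

End LayerCake.

Definition idx_range (m n : nat) (f : idx m n) : {set 'I_n} := [set f k | k : 'I_m].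

Lemma all_one_range (R : realFieldType) m n (J : {set 'I_n}) (f : idx m n) :
  all_one R J f = (idx_range f \subset J)%:R.
Proof.
rewrite /all_one; suff -> : [forall k, f k \in J] = (idx_range f \subset J).
  by case: (_ \subset _).
apply/forallP/subsetP => [fJ _ /imsetP[k _ ->] // | fJ k].
by apply/fJ/imset_f.
Qed.

Lemma decomposes_layer_cake (R : realFieldType) m n (P : tensor R m n -> Prop)
    (A : tensor R m n) s h (J : nat -> {set 'I_n}) :
  (forall k, (1 <= k <= s)%N -> 0 < h k) ->
  (forall k, (1 <= k < s)%N -> J k.+1 \proper J k) ->
  P (fun f => A f - layer_sum s h J (idx_range f)) -> P A \/ decomposes P A.
Proof.
have sumE f : \sum_(1 <= k < s.+1) h k * all_one R (J k) f = layer_sum s h J (idx_range f).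
  by apply: eq_bigr => k _; rewrite all_one_range mulr_natr.
case: s h J sumE => [|s] h J sumE h_gt0 J_chain PM.
  left; suff -> : A = (fun f => A f - layer_sum 0 h J (idx_range f)) by [].
  by apply: functional_extensionality => f; rewrite /layer_sum big_geq ?subr0.
right; exists (fun f => A f - layer_sum s.+1 h J (idx_range f)), s.+1, h, J.
by split=> // f; rewrite sumE subrK.
Qed.

Section Rows.
Variables (R : realFieldType) (m n : nat).
Implicit Types (A M : tensor R m.+1 n) (f : idx m.+1 n) (i : 'I_n).

Lemma starts_withE i f : starts_with i f = (f ord0 == i).
Proof.
apply/forallP/eqP => [f0 | f0 k]; first by have /implyP/(_ isT)/eqP := f0 ord0.
by apply/implyP => /eqP k0; rewrite (_ : k = ord0) ?f0 //; apply/val_inj.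
Qed.

Lemma card_starts_with i : #|[pred f : idx m.+1 n | starts_with i f]| = (n ^ m)%N.
Proof.
pose F (k : 'I_m.+1) : pred 'I_n := if k == ord0 then pred1 i else predT.
rewrite (eq_card (B := family F)) => [|f]; last first.
  rewrite !inE starts_withE; apply/eqP/familyP => [f0 k | /(_ ord0)].
    by rewrite /F; case: eqP => [-> | _] //=; rewrite inE f0.
  by rewrite /F eqxx inE => /eqP.
rewrite card_family foldrE big_map big_enum /= big_ord_recl /F eqxx card1 mul1n.
rewrite (eq_bigr (fun _ => n)) ?prod_nat_const ?card_ord // => k _.
by rewrite eq_sym (negbTE (neq_lift _ _)) card_ord.
Qed.

Lemma offdiag_row i f : starts_with i f -> f != diagidx m.+1 i -> offdiag f.
Proof.
rewrite starts_withE => /eqP f0 fNi; apply/forallP => j; apply: contraNneq fNi => fj.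
by rewrite fj -f0 fj ffunE.
Qed.

Lemma offdiag_permidx (s : 'S_m.+1) f : offdiag f -> offdiag (permidx s f).
Proof.
move=> /forallP f_off; apply/forallP => j; apply: contra (f_off j) => /eqP sf.
apply/eqP/ffunP => k; have := congr1 (fun g : idx m.+1 n => g ((s^-1)%g k)) sf.
by rewrite !ffunE permKV.
Qed.

Lemma permidx_tperm0 f (l : 'I_m.+1) : permidx (tperm ord0 l) f ord0 = f l.
Proof. by rewrite ffunE tpermL. Qed.

Lemma rowsum_Z M i : is_Z M -> rowsum M i = M (diagidx m.+1 i) - offrow_abs M i.
Proof.
move=> MZ; have diag_i : starts_with i (diagidx m.+1 i) by rewrite starts_withE ffunE.
rewrite /rowsum (bigD1 _ diag_i) /offrow_abs -sumrN /=; congr (_ + _).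
apply: eq_bigr => f /andP[fi fNi].
by rewrite ler0_norm ?opprK // MZ // (offdiag_row fi fNi).
Qed.

Definition offrow_max A i : R :=
  \big[Num.max/0]_(f | starts_with i f && offdiag f) A f.

Lemma offrow_max_ge0 A i : 0 <= offrow_max A i.
Proof. exact: bigmax_ge_id. Qed.

Lemma natr_expn_gt0 i : 0 < (n ^ m)%:R :> R.
Proof. by rewrite ltr0n expn_gt0 (leq_ltn_trans (leq0n i) (ltn_ord i)). Qed.

Lemma B0_offrow_max A i : is_B0 A -> offrow_max A i *+ n ^ m <= rowsum A i.
Proof.
move=> /(_ i)[row_ge0 entry_le]; rewrite -mulr_natr -ler_pdivlMr ?(natr_expn_gt0 i) //.
apply: bigmax_le => [|f /andP[fi f_off]]; first by rewrite divr_ge0 // ltW // (natr_expn_gt0 i).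
by apply: entry_le; rewrite // (forallP f_off).
Qed.

Lemma B_offrow_max A i : is_B A -> offrow_max A i *+ n ^ m < rowsum A i.
Proof.
move=> /(_ i)[row_gt0 entry_lt]; rewrite -mulr_natr -ltr_pdivlMr ?(natr_expn_gt0 i) //.
apply: bigmax_lt => [|f /andP[fi f_off]]; first by rewrite divr_gt0 // (natr_expn_gt0 i).
by apply: entry_lt; rewrite // (forallP f_off).
Qed.

Section LayerSubtraction.
Variables (A : tensor R m.+1 n) (s : nat) (h : nat -> R) (J : nat -> {set 'I_n}).
Hypothesis cake : layer_cake (offrow_max A) s h J.

Let M : tensor R m.+1 n := fun f => A f - layer_sum s h J (idx_range f).

Lemma layer_sum_range f :
  exists2 l, layer_sum s h J (idx_range f) = offrow_max A (f l) &
    forall l, layer_sum s h J (idx_range f) <= offrow_max A (f l).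
Proof.
case: cake => _ _ _ /(_ (idx_range f))[|S_le [x /imsetP[l _ ->] Sx]].
  by apply/set0Pn; exists (f ord0); apply: imset_f.
by exists l => // l'; apply/S_le/imset_f.
Qed.

(* A positive off-diagonal entry reappears, by symmetry, in the row of each of
   its indices, so it is below the row maximum of each of them. *)
Lemma is_Z_sub_layer : pos_offdiag_sym A -> is_Z M.
Proof.
move=> hsym f f_off; rewrite /M subr_le0.
have [l -> S_le] := layer_sum_range f.
have [A_le0 | A_pos] := leP (A f) 0; first by apply: le_trans A_le0 _; apply: offrow_max_ge0.
rewrite (hsym f f_off A_pos (tperm ord0 l)); apply: le_bigmax_cond.
by rewrite starts_withE permidx_tperm0 eqxx offdiag_permidx.
Qed.

Lemma rowsum_sub_layer i : rowsum A i - offrow_max A i *+ n ^ m <= rowsum M i.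
Proof.
rewrite /rowsum /M sumrB lerD2l lerN2.
rewrite (eq_bigl (mem [pred f : idx m.+1 n | starts_with i f])) // -(card_starts_with i).
rewrite -sumr_const; apply: ler_sum => f fi.
have /eqP <- : f ord0 == i by rewrite -starts_withE.
by have [l _ S_le] := layer_sum_range f; apply: S_le.
Qed.

End LayerSubtraction.

Lemma diag_dominated_Z M : is_Z M -> (forall i, 0 <= rowsum M i) -> diag_dominated M.
Proof. by move=> MZ row_ge0 i; rewrite -subr_ge0 -rowsum_Z. Qed.

Lemma strictly_diag_dominated_Z M :
  is_Z M -> (forall i, 0 < rowsum M i) -> strictly_diag_dominated M.
Proof. by move=> MZ row_gt0 i; rewrite -subr_gt0 -rowsum_Z. Qed.

End Rows.

Theorem theorem4p3 (R : realFieldType) (m n : nat) (hm : (2 <= m)%N)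
    (A : tensor R m n) (hsym : pos_offdiag_sym A) :
  (is_B0 A ->
     (is_Z A /\ diag_dominated A) \/
     decomposes (fun M => is_Z M /\ diag_dominated M) A) /\
  (is_B A ->
     (is_Z A /\ strictly_diag_dominated A) \/
     decomposes (fun M => is_Z M /\ strictly_diag_dominated M) A).
Proof.
case: m hm A hsym => [//|m] _ A hsym.
have [s [h [J cake]]] := layer_cake_exists (offrow_max_ge0 A).
have [h_gt0 J_chain _ _] := cake.
have MZ := is_Z_sub_layer cake hsym.
split=> AB; apply: (decomposes_layer_cake h_gt0 J_chain); split=> //.
  apply: diag_dominated_Z => // i; apply: le_trans (rowsum_sub_layer cake i).
  by rewrite subr_ge0 B0_offrow_max.
apply: strictly_diag_dominated_Z => // i; apply: lt_le_trans (rowsum_sub_layer cake i).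
by rewrite subr_gt0 B_offrow_max.
Qed.
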